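(* Let $V$ be a set and let $(\mathcal{H}_\ell)_{\ell\in\mathbb{Z}}$ be a hypergraph chain over $V$ with Helly Number $h$ and Colorful Helly Number $k\ge h$. Then there exists a function $\beta:(0,1)\to[0,1)$ with $\lim_{\alpha\to1}\beta(\alpha)=1$ such that for every $\ell\in\mathbb{Z}$, every finite set $S\subset V$ and every $\alpha\in(0,1)$, if $\left|\mathcal{H}_\ell\cap\binom{S}{h}\right|\ge\alpha\binom{|S|}{h}$, then there exists $S'\subset S$ with $|S'|\ge\beta(\alpha)|S|$ and $S'\in\mathcal{H}_{\ell+3}$.
   Context: A hypergraph on a base set $V$ is a family $\mathcal{H}\subset 2^V$; it is downwards closed if $H\in\mathcal{H}$ and $G\subset H$ imply $G\in\mathcal{H}$. A hypergraph chain over $V$ is a sequence $(\mathcal{H}_\ell)_{\ell\in\mathbb{Z}}$ of downwards closed hypergraphs on $V$ with $\mathcal{H}_\ell\subset\mathcal{H}_{\ell+1}$ for all $\ell$. It has Helly Number $h$ if for every $\ell\in\mathbb{Z}$ and every $S\subseteq V$, $\binom{S}{h}\subset\mathcal{H}_\ell$ implies $S\in\mathcal{H}_{\ell+1}$ (where $\binom{S}{h}$ is the set of $h$-element subsets of $S$). For $S_1,\dots,S_k\subset V$, a set $F\subset V$ is a colorful selection if there is a surjective map $\phi:\{1,\dots,k\}\to F$ with $\phi(i)\in S_i$ for all $i$; the set of these is $S_1\otimes\dots\otimes S_k$. The chain has Colorful Helly Number $k$ if whenever $S_1,\dots,S_k$ are finite subsets of $V$ and $\ell\in\mathbb{Z}$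 with $S_1\otimes\dots\otimes S_k\subset\mathcal{H}_\ell$, some $S_j\in\mathcal{H}_{\ell+1}$. *)

From HB Require Import structures.
From mathcomp Require Import all_boot all_order all_algebra.
From mathcomp Require Import finmap.
From mathcomp Require Import all_classical all_reals all_analysis.
Set Implicit Arguments. Unset Strict Implicit. Unset Printing Implicit Defensive.
Import Order.TTheory GRing.Theory Num.Theory.
Local Open Scope classical_set_scope.
Local Open Scope ring_scope.

Definition hypergraph (V : Type) := set (set V).

Definition downwards_closed (V : Type) (H : hypergraph V) : Prop :=
  forall A B : set V, H A -> B `<=` A -> H B.

Definition hypergraph_chain (V : Type) (H : int -> hypergraph V) : Prop :=
  (forall l, downwards_closed (H l)) /\ (forall l, H l `<=` H (l + 1)).

Definition is_hsubset (V : choiceType) (h : nat) (S G : set V) : Prop :=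
  G `<=` S /\ exists F : {fset V}, #|` F |%fset = h /\ G = [set` F].

Definition helly_number (V : choiceType) (H : int -> hypergraph V) (h : nat) : Prop :=
  forall (l : int) (S : set V),
    (forall G, is_hsubset h S G -> H l G) -> H (l + 1) S.

(* Colorful selections of S_1,...,S_k are exactly the images of maps
   phi : 'I_k -> V with phi i \in S_i (phi surjective onto its image). *)
Definition colorful_selection (V : choiceType) (k : nat)
    (S : 'I_k -> {fset V}) (F : set V) : Prop :=
  exists phi : 'I_k -> V, (forall i, phi i \in S i) /\ F = range phi.

Definition colorful_helly_number (V : choiceType) (H : int -> hypergraph V) (k : nat) : Prop :=
  forall (S : 'I_k -> {fset V}) (l : int),
    (forall F, colorful_selection S F -> H l F) ->
    exists j : 'I_k, H (l + 1) [set` S j].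

Definition count_hedges (V : choiceType) (H : hypergraph V) (h : nat) (S : {fset V}) : nat :=
  #|` [fset G in fpowerset S | (#|` G | == h)%fset && `[< H [set` G] >] ] |%fset.

(* Greedily remove pairwise disjoint h-sets outside H_(l+2) from S until none
   is left; by the Helly number the remainder S' lies in H_(l+3), and it only
   remains to show that few sets, say r, were removed.  Split k * q of them,
   q = r / k, into k colour classes of q sets.  For each of the q^k ways to pick
   one removed set per class, the colourful Helly number yields a colourful
   selection outside H_(l+1), and the Helly number an h-subset of it outside
   H_l.  That h-set meets h distinct classes and fixes the pick there, so it
   comes from at most q^(k-h) picks: H_l misses at least q^h of the h-subsets
   of S.  Since it misses at most (1 - a) |S|^h of them, q <= (1 - a)^(1/h) |S|
   and hence |S| - |S'| <= h r <= 2hk (1 - a)^(1/h) |S|.  For h = 0 the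
   hypothesis puts the empty set into H_l, so S itself lies in H_(l+1). *)

From HB Require Import structures.
From mathcomp Require Import all_boot all_order all_algebra.
From mathcomp Require Import finmap.
From mathcomp Require Import all_classical all_reals all_analysis.
From mathcomp Require Import zify lra.
From mathcomp Require unstable.
Import Order.TTheory GRing.Theory Num.Theory numFieldNormedType.Exports.
Local Open Scope classical_set_scope.
Local Open Scope ring_scope.
Set Implicit Arguments. Unset Strict Implicit. Unset Printing Implicit Defensive.

Lemma bin_leq_expn n h : ('C(n, h) <= n ^ h)%N.
Proof.
apply: leq_trans (leq_pmulr _ (fact_gt0 h)) _.
rewrite bin_ffact ffact_prod -[X in (_ <= _ ^ X)%N](card_ord h) -prod_nat_const.
by apply: leq_prod => i _; rewrite leq_subr.
Qed.

Section Hyperedges.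
Variable V : choiceType.
Local Open Scope fset_scope.

Definition hedges (G : hypergraph V) (h : nat) (S : {fset V}) : {fset {fset V}} :=
  [fset F in fpowerset S | (#|` F| == h) && `[< G [set` F] >]].

Lemma mem_hedges (G : hypergraph V) h S F :
  F `<=` S -> #|` F| = h -> G [set` F] -> F \in hedges G h S.
Proof. by move=> FS Fh GF; rewrite !inE fpowersetE FS Fh eqxx; apply/asboolP. Qed.

Lemma card_hedges (G : hypergraph V) h S : {in hedges G h S, forall F, #|` F| = h}.
Proof. by move=> F; rewrite !inE => /andP[_ /andP[/eqP]]. Qed.

Lemma count_hedges0_gt0 (G : hypergraph V) S : (0 < count_hedges G 0 S)%N -> G set0.
Proof.
rewrite cardfs_gt0 => /fset0Pn[F]; rewrite !inE => /andP[_ /andP[/eqP/cardfs0_eq -> /asboolP]].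
by rewrite set_fset0.
Qed.

Lemma card_hsubsets_le (S : {fset V}) h :
  (#|` [fset F in fpowerset S | #|` F| == h]| <= 'C(#|` S|, h))%N.
Proof.
pose sub_of_S (Y : {set S}) := [fsetval v in Y].
have sub_image : [fset F in fpowerset S | #|` F| == h]
    `<=` [fset sub_of_S Y | Y in finset (fun Y : {set S} => #|Y| == h)].
  apply/fsubsetP => F; rewrite !inE fpowersetE => /andP[FS /eqP Fh].
  apply/imfsetP; exists (fsub S F); last by rewrite /sub_of_S fsubK.
  by rewrite /= inE card_fsub // Fh.
apply: leq_trans (fsubset_leq_card sub_image) _.
apply: leq_trans (leq_imfset_card _ _ _) _.
rewrite -(card_uniqP (enum_finmem_uniq _)) (eq_card (enum_finmemE _)).
by rewrite card_draws -cardfE.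
Qed.

Lemma count_hedges_addC (G : hypergraph V) h S :
  (count_hedges G h S + count_hedges (~` G) h S <= 'C(#|` S|, h))%N.
Proof.
apply: leq_trans (card_hsubsets_le S h); rewrite -cardfsUI.
have -> : hedges G h S `&` hedges (~` G) h S = fset0.
  apply/fsetP => F; rewrite !inE.
  by case: (asboolP (G [set` F])) => GF; case: asboolP; rewrite ?andbF.
rewrite cardfs0 addn0; apply: fsubset_leq_card; apply/fsubsetP => F.
by rewrite !inE => /orP[] /andP[-> /andP[-> _]].
Qed.

End Hyperedges.

Section Packing.
Variable V : choiceType.
Local Open Scope fset_scope.

Lemma exists_maximal_packing (h : nat) (bad : {fset V} -> Prop) (S : {fset V}) :
  (0 < h)%N ->
  exists (r : nat) (e : nat -> {fset V}) (S' : {fset V}),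
  [/\ S' `<=` S, (#|` S| <= #|` S'| + h * r)%N,
   forall p, (p < r)%N -> [/\ e p `<=` S, #|` e p| = h & bad (e p)],
   forall p p' v, (p < r)%N -> (p' < r)%N -> v \in e p -> v \in e p' -> p = p' &
   forall F, F `<=` S' -> #|` F| = h -> ~ bad F].
Proof.
move=> h_gt0; elim: {S}_.+1 {-2}S (ltnSn #|` S|) => // m IH S.
rewrite ltnS => S_le.
have [[G [GS Gh Gbad]]|nobad] := pselect (exists G, [/\ G `<=` S, #|` G| = h & bad G]);
  last first.
  exists 0%N, (fun=> fset0), S; split => //; first by rewrite muln0 addn0.
  by move=> F FS Fh Fbad; apply: nobad; exists F.
have hS : (h <= #|` S|)%N by rewrite -Gh fsubset_leq_card.
have [|r [e [S' [S'S Scard eP edisj S'good]]]] := IH (S `\` G).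
  by rewrite cardfsDS // Gh; lia.
exists r.+1, (fun p => if p is p'.+1 then e p' else G), S'; split => //.
- exact: fsubset_trans S'S (fsubsetDl _ _).
- by move: Scard; rewrite cardfsDS // Gh mulnS; lia.
- case=> [|p] //= /eP[eS eh ebad]; split => //.
  exact: fsubset_trans eS (fsubsetDl _ _).
- have notinG p v : (p < r)%N -> v \in e p -> v \notin G.
    by move=> /eP[/fsubsetP eS _ _] /eS; rewrite inE => /andP[].
  case=> [|p] [|p'] v //= p_lt p'_lt.
  + by move=> vG /(notinG _ _ p'_lt); rewrite vG.
  + by move=> /(notinG _ _ p_lt) /negP.
  + by move=> ve ve'; rewrite (edisj p p' v).
Qed.

End Packing.

Section DoubleCounting.
Variables (V : choiceType) (k q : nat) (B : 'I_k -> 'I_q -> {fset V}).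
Hypothesis B_disjoint : forall i j i' j' v, v \in B i j -> v \in B i' j' -> i = i' /\ j = j'.
Local Open Scope fset_scope.

Definition selects (x : {ffun 'I_k -> 'I_q}) (F : {fset V}) : Prop :=
  exists phi : 'I_k -> V, (forall i, phi i \in B i (x i)) /\ ([set` F] `<=` range phi)%classic.

Lemma selects_block x F i j v : selects x F -> v \in F -> v \in B i j -> x i = j.
Proof.
move=> [phi [phiB Fphi]] vF vB; have [i' _ phi_v] := Fphi v vF.
have := phiB i'; rewrite phi_v => vB'.
by have [-> ->] := B_disjoint vB vB'.
Qed.

Lemma card_selects_le (h : nat) (F : {fset V}) : (0 < q)%N -> #|` F| = h ->
  (#|[set x | `[< selects x F >]]%SET| <= q ^ (k - h))%N.
Proof.
move=> q_gt0 Fh.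
have [[x0 x0F]|none] := pselect (exists x0, selects x0 F); last first.
  rewrite (@eq_card _ _ pred0) ?card0 // => x /=.
  by rewrite inE; apply/asboolP => xF; apply: none; exists x.
(* On the at least [h] colours whose blocks meet [F], every selecting [x] agrees with [x0]. *)
pose I := [set i : 'I_k | [exists j, B i j `&` F != fset0]]%SET.
pose fam i := if i \in I then pred1 (x0 i) else predT.
have sub_fam : [set x | `[< selects x F >]]%SET \subset family fam.
  apply/fintype.subsetP => x; rewrite inE => /asboolP xF.
  apply/familyP => i; rewrite /fam.
  case: ifP => // /[!inE] /existsP[j /fset0Pn[v]] /[!inE] /andP[vB vF].
  by rewrite /= (selects_block xF vF vB) (selects_block x0F vF vB).
apply: leq_trans (subset_leq_card sub_fam) _.
rewrite card_family foldrE big_map big_enum /=.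
have -> : (\prod_(i in 'I_k) #|fam i| = \prod_(i in ~: I) q)%N.
  rewrite (big_mkcond (fun i => i \in ~: I)) /=; apply: eq_bigr => i _.
  rewrite /fam finset.in_setC; case: (i \in I) => /=; first exact: card1.
  by rewrite (eq_card (B := 'I_q)) ?card_ord.
rewrite prod_nat_const leq_pexp2l //.
have : (#|I| + #|~: I| = k)%N by rewrite cardsC card_ord.
suff : (h <= #|I|)%N by lia.
have [phi0 [phi0B Fphi0]] := x0F.
pose I0 := [set i : 'I_k | phi0 i \in F]%SET.
have I0I : I0 \subset I.
  apply/fintype.subsetP => i; rewrite !inE => phiF.
  apply/existsP; exists (x0 i); apply/fset0Pn; exists (phi0 i).
  by rewrite inE phi0B phiF.
apply: leq_trans (subset_leq_card I0I).
rewrite -Fh cardE -(size_map phi0); apply: uniq_leq_size; first exact: fset_uniq.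
move=> v vF; have [i _ phi_v] := Fphi0 v vF; apply/mapP; exists i => //.
by rewrite mem_enum inE phi_v.
Qed.

Lemma card_selecting_le (h : nat) (M : {fset {fset V}}) : (0 < q)%N ->
  {in M, forall F, #|` F| = h} -> (forall x, exists2 F, F \in M & selects x F) ->
  (q ^ k <= #|` M| * q ^ (k - h))%N.
Proof.
move=> q_gt0 Mh covered.
have cover : [set: {ffun 'I_k -> 'I_q}]%SET
    \subset (\bigcup_(F <- M) [set x | `[< selects x F >]])%SET.
  apply/fintype.subsetP => x _; have [F FM xF] := covered x.
  by rewrite (big_rem F) //= !inE asboolT.
have -> : (q ^ k = #|[set: {ffun 'I_k -> 'I_q}]%SET|)%N.
  by rewrite cardsT card_ffun !card_ord.
apply: leq_trans (subset_leq_card cover) _; apply: leq_trans (unstable.card_big_setU _ _ _) _.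
rewrite -sum1_size big_distrl big_seq [X in (_ <= X)%N]big_seq.
by apply: leq_sum => F FM; rewrite /= mul1n card_selects_le // Mh.
Qed.

End DoubleCounting.

Section RealBounds.
Variable R : realType.

Lemma exprn_powR_invn (h : nat) (x : R) : (0 < h)%N -> 0 <= x ->
  (x `^ h%:R^-1) ^+ h = x.
Proof.
move=> h_gt0 x_ge0; rewrite -powR_mulrn ?powR_ge0 // -powRrM mulVf ?powRr1 //.
by rewrite pnatr_eq0 -lt0n.
Qed.

Lemma natr_le_of_expn_le (h m N : nat) (x : R) : (0 < h)%N -> 0 <= x ->
  (m ^ h <= N)%N -> N%:R <= x ^+ h -> m%:R <= x.
Proof.
move=> h_gt0 x_ge0 mN Nx; rewrite -(ler_pXn2r h_gt0) ?nnegrE ?ler0n //.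
by apply: le_trans Nx; rewrite -natrX ler_nat.
Qed.

Lemma natr_le_2mul_of_divn_le (r k : nat) (x : R) : (0 < k)%N -> 1 <= x ->
  (r %/ k)%:R <= x -> r%:R <= 2 * k%:R * x.
Proof.
move=> k_gt0 x_ge1 qx; have := ltn_ceil r k_gt0.
rewrite -(ltr_nat R) natrM mulrC -natr1 => /ltW /le_trans; apply.
have k_ge0 : (0 : R) <= k%:R by rewrite ler0n.
nra.
Qed.

Lemma nonedges_le_expr (n h cnt N : nat) (a t : R) : 0 <= t -> t ^+ h = 1 - a ->
  (cnt + N <= 'C(n, h))%N -> a * ('C(n, h))%:R <= cnt%:R -> N%:R <= (t * n%:R) ^+ h.
Proof.
move=> t_ge0 th cntN acnt.
have N_le : N%:R <= (1 - a) * ('C(n, h))%:R :> R.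
  rewrite mulrBl mul1r lerBrDl; apply: le_trans (lerD acnt (lexx _)) _.
  by rewrite -natrD ler_nat.
apply: le_trans N_le _; rewrite exprMn th ler_wpM2l -?natrX ?ler_nat ?bin_leq_expn //.
by rewrite -th exprn_ge0.
Qed.

End RealBounds.

Section Beta.
Variable R : realType.

Lemma cvg_powR_subr1 (e : R) : 0 < e -> (1 - a) `^ e @[a --> 1^'-] --> (0 : R).
Proof.
move=> e0; apply: cvg_comp (powR_cvg0 e0).
move=> P [d /= d0 Pd]; near=> a.
have a1 : a < 1 by near: a; exact: nbhs_left_lt.
apply: Pd => /=; last by rewrite subr_gt0.
rewrite sub0r normrN ger0_norm ?subr_ge0 ?(ltW a1) // ltrBlDr -ltrBlDl.
by near: a; apply: nbhs_left_gt; rewrite ltrBlDr ltrDl.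
Unshelve. all: by end_near.
Qed.

Definition helly_beta (c e a : R) : R := Num.max 0 (1 - c * (1 - a) `^ e).

Lemma helly_beta_ge0_lt1 (c e a : R) : 0 < c -> a < 1 -> 0 <= helly_beta c e a < 1.
Proof.
move=> c_gt0 a1; rewrite /helly_beta le_max lexx /= gt_max ltr01 /= ltrBlDr ltrDl.
by rewrite mulr_gt0 // powR_gt0 // subr_gt0.
Qed.

Lemma helly_beta_mulr_le (c e a x y : R) : 0 <= x -> 0 <= y ->
  (1 - c * (1 - a) `^ e) * x <= y -> helly_beta c e a * x <= y.
Proof. by move=> x_ge0 y_ge0 le_y; rewrite /helly_beta maxr_pMl // ge_max mul0r y_ge0. Qed.

Lemma helly_beta_cvg (c e : R) : 0 < e -> helly_beta c e a @[a --> 1^'-] --> (1 : R).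
Proof.
move=> e0.
have inner : (1 - c * (1 - a) `^ e) @[a --> 1^'-] --> (1 : R).
  rewrite -[X in _ --> X]subr0 -(mulr0 c).
  by apply: cvgB; [exact: cvg_cst | apply: cvgM; [exact: cvg_cst | exact: cvg_powR_subr1]].
have max0_cont : {for 1, continuous (fun x : R^o => Num.max 0 x)}.
  apply: (@continuous_max _ _ (cst 0) id); [exact: cvg_cst | exact: cvg_id].
have := cvg_comp _ _ inner max0_cont.
by rewrite /= max_r ?ler01.
Qed.

End Beta.

Section HellyChain.
Variables (V : choiceType) (H : int -> hypergraph V) (h k : nat).
Hypotheses (H_chain : hypergraph_chain H) (H_helly : helly_number H h)
  (H_colorful : colorful_helly_number H k).

Lemma chain_le l m : l <= m -> H l `<=` H m.
Proof.
move=> lm; have [n ->] : exists n : nat, m = l + n%:Z.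
  by exists `|m - l|%N; rewrite gez0_abs ?subr_ge0 // addrCA subrr addr0.
elim: n => [|n IH]; first by rewrite addr0.
by rewrite -addn1 PoszD addrA => X /IH; apply: H_chain.2.
Qed.

Lemma helly_fset l (X : set V) :
  (forall F : {fset V}, [set` F] `<=` X -> #|` F|%fset = h -> H l [set` F]) ->
  H (l + 1) X.
Proof. by move=> HX; apply: H_helly => G [GX [F [Fh GF]]]; rewrite GF in GX *; apply: HX. Qed.

Lemma exists_nonedge_hsubset l (X : set V) : ~ H (l + 1) X ->
  exists F : {fset V}, [/\ [set` F] `<=` X, #|` F|%fset = h & ~ H l [set` F]].
Proof.
move=> nX; apply: contrapT => noF; apply/nX/helly_fset => F FX Fh.
by apply: contrapT => nF; apply: noF; exists F.
Qed.

Lemma exists_colorful_nonedge l (S : 'I_k -> {fset V}) :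
  (forall j, ~ H (l + 1) [set` S j]) ->
  exists phi : 'I_k -> V, (forall i, phi i \in S i) /\ ~ H l (range phi).
Proof.
move=> nS; apply: contrapT => noF.
have [j] : exists j, H (l + 1) [set` S j].
  apply: H_colorful => _ [phi [phiS ->]].
  by apply: contrapT => nphi; apply: noF; exists phi.
exact: nS.
Qed.

Section NonedgeCount.
Variables (l : int) (S : {fset V}) (r : nat) (e : nat -> {fset V}).
Hypothesis e_nonedge :
  forall p, (p < r)%N -> [/\ (e p `<=` S)%fset, #|` e p|%fset = h & ~ H (l + 2) [set` e p]].
Hypothesis e_disjoint :
  forall p p' v, (p < r)%N -> (p' < r)%N -> v \in e p -> v \in e p' -> p = p'.

Lemma packing_nonedges_gt0 : (0 < r)%N -> (0 < count_hedges (~` H l) h S)%N.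
Proof.
move=> r_gt0; have [eS eh ne] := e_nonedge r_gt0; rewrite cardfs_gt0.
apply/fset0Pn; exists (e 0%N); apply: mem_hedges => // He.
by apply/ne/(chain_le _ He); rewrite lerDl.
Qed.

Lemma packing_nonedges_ge : (0 < h)%N -> (h <= k)%N ->
  ((r %/ k) ^ h <= count_hedges (~` H l) h S)%N.
Proof.
move=> h_gt0 hk; set q := (r %/ k)%N.
have [->|q_gt0] := posnP q; first by rewrite exp0n.
(* Block [(i, j)] is the packed set numbered [enum_rank (i, j) < k * q <= r]. *)
pose index (i : 'I_k) (j : 'I_q) : nat := enum_rank (i, j).
have index_lt i j : (index i j < r)%N.
  apply: leq_trans (ltn_ord _) _; rewrite card_prod !card_ord mulnC.
  exact: leq_divM.
pose B i j := e (index i j).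
have B_disjoint i j i' j' v : v \in B i j -> v \in B i' j' -> i = i' /\ j = j'.
  move=> vB vB'; have := e_disjoint (index_lt i j) (index_lt i' j') vB vB'.
  by move=> /val_inj /enum_rank_inj [-> ->].
have covered x : exists2 F, F \in hedges (~` H l) h S & selects B x F.
  have [|phi [phiB nphi]] := @exists_colorful_nonedge (l + 1) (fun i => B i (x i)).
    by move=> i; have [_ _] := e_nonedge (index_lt i (x i)); rewrite -addrA.
  have [F [Fphi Fh nF]] := exists_nonedge_hsubset nphi.
  exists F; last by exists phi.
  apply: mem_hedges => //; apply/fsubsetP => v /Fphi [i _ <-].
  by have [/fsubsetP eS _ _] := e_nonedge (index_lt i (x i)); apply/eS/phiB.
have := card_selecting_le B_disjoint q_gt0 (@card_hedges _ _ _ _) covered.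
by rewrite -{1}(subnKC hk) expnD leq_pmul2r // expn_gt0 q_gt0.
Qed.

End NonedgeCount.

Lemma exists_large_subset (R : realType) l (S : {fset V}) (a t : R) :
  (0 < h)%N -> (h <= k)%N -> 0 <= t -> t ^+ h = 1 - a ->
  a * ('C(#|` S|%fset, h))%:R <= (count_hedges (H l) h S)%:R ->
  exists2 S' : {fset V}, (S' `<=` S)%fset /\ H (l + 3) [set` S'] &
    (1 - (2 * h * k)%:R * t) * (#|` S|%fset)%:R <= (#|` S'|%fset)%:R.
Proof.
move=> h_gt0 hk t_ge0 th acnt.
have [r [e [S' [S'S S_le e_nonedge e_disjoint S'_good]]]] :=
  exists_maximal_packing (fun F => ~ H (l + 2) [set` F]) S h_gt0.
exists S'.
  split => //; have -> : l + 3 = l + 2 + 1 by rewrite -addrA.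
  apply: helly_fset => F FS' Fh.
  by apply: contrapT; apply: S'_good Fh; apply/fsubsetP => v /FS'.
set n := #|` S|%fset; move: S_le; rewrite -(ler_nat R) natrD natrM => S_le.
have k_gt0 := leq_trans h_gt0 hk.
have [r0|r_gt0] := posnP r.
  move: S_le; rewrite r0 mulr0 addr0; apply: le_trans.
  by rewrite ler_piMl ?ler0n // lerBlDr lerDl mulr_ge0.
have N_le := nonedges_le_expr t_ge0 th (count_hedges_addC (H l) h S) acnt.
have tn_ge0 : 0 <= t * n%:R by rewrite mulr_ge0.
have tn_ge1 : 1 <= t * n%:R.
  apply: (@natr_le_of_expn_le _ h 1 _ _ h_gt0 tn_ge0 _ N_le).
  by rewrite exp1n (packing_nonedges_gt0 e_nonedge).
have q_le := natr_le_of_expn_le h_gt0 tn_ge0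
  (packing_nonedges_ge e_nonedge e_disjoint h_gt0 hk) N_le.
have r_le := natr_le_2mul_of_divn_le k_gt0 tn_ge1 q_le.
have h_ge0 : (0 : R) <= h%:R by rewrite ler0n.
rewrite !natrM; nra.
Qed.

Lemma helly0_full l (X : set V) : h = 0%N -> H l set0 -> H (l + 1) X.
Proof.
move=> h0 H0; apply: helly_fset => F _; rewrite h0 => /cardfs0_eq ->.
by rewrite set_fset0.
Qed.

End HellyChain.

Unset Implicit Arguments. Set Strict Implicit.

Theorem theorem5 (R : realType) (V : choiceType) (H : int -> hypergraph V)
    (h k : nat) :
  hypergraph_chain H -> helly_number H h -> colorful_helly_number H k ->
  (h <= k)%N ->
  exists beta : R -> R,
    (forall a : R, 0 < a < 1 -> 0 <= beta a < 1) /\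
    (beta a @[a --> (1 : R)^'-] --> (1 : R)) /\
    (forall (l : int) (S : {fset V}) (a : R), 0 < a < 1 ->
       a * ('C(#|` S |%fset, h))%:R <= (count_hedges (H l) h S)%:R ->
       exists S' : {fset V}, (S' `<=` S)%fset /\
         beta a * (#|` S |%fset)%:R <= (#|` S' |%fset)%:R /\
         H (l + 3) [set` S']).
Proof.
move=> H_chain H_helly H_colorful hk.
have [h0 | h_gt0] := posnP h.
  exists (helly_beta 1 1); split; [|split].
  - by move=> a /andP[_ a1]; apply: helly_beta_ge0_lt1.
  - exact: helly_beta_cvg.
  move=> l S a /andP[a_gt0 a1] acnt; exists S; split => //; split.
    have /andP[b_ge0 b_lt1] := helly_beta_ge0_lt1 1 ltr01 a1.
    by rewrite ler_piMl ?ler0n ?ltW.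
  apply: (chain_le H_chain (_ : l + 1 <= l + 3)); first by rewrite lerD2l.
  apply: (helly0_full H_helly _ h0); apply: (@count_hedges0_gt0 _ _ S).
  by move: acnt; rewrite -(ltr_nat R) h0 bin0 mulr1; apply: lt_le_trans.
have k_gt0 := leq_trans h_gt0 hk.
exists (helly_beta (2 * h * k)%:R h%:R^-1); split; [|split].
- move=> a /andP[_ a1]; apply: helly_beta_ge0_lt1 a1.
  by rewrite ltr0n !muln_gt0 h_gt0 k_gt0.
- by apply: helly_beta_cvg; rewrite invr_gt0 ltr0n.
move=> l S a /andP[_ a1] acnt.
have [|S' [S'S HS'] S'_big] := exists_large_subset H_chain H_helly H_colorful
  h_gt0 hk (powR_ge0 _ _) (exprn_powR_invn h_gt0 _) acnt.
  by rewrite subr_ge0 ltW.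
exists S'; split => //; split => //.
by apply: helly_beta_mulr_le S'_big; rewrite ler0n.
Qed.
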